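(* Let $n\ge3$ and $\alpha\in[0,1]$. Then \[ \rho(A_\alpha(P_n))\le\begin{cases}2\alpha+2(1-\alpha)\cos\left(\frac{\pi}{n+1}\right), & 0\le\alpha<1/2,\\[2pt] 2\alpha+2(1-\alpha)\cos\left(\frac{\pi}{n}\right), & 1/2\le\alpha\le1.\end{cases} \] Equality holds if and only if $\alpha\in\{0,1/2,1\}$.
   Context: $P_n$ is the path on $n$ vertices. For a graph $G$, $A(G)$ is the adjacency matrix, $D(G)$ the diagonal degree matrix, and $A_\alpha(G)=\alpha D(G)+(1-\alpha)A(G)$; $\rho(M)$ is the largest eigenvalue of a real symmetric matrix $M$. *)

From Stdlib Require Import Reals Lra Lia Arith.
Open Scope R_scope.

Fixpoint rsum (n : nat) (f : nat -> R) : R :=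
  match n with
  | O => 0
  | S k => rsum k f + f k
  end.

(* An n x n real matrix is represented by its entries M i j for i, j < n
   (vertices / indices are 0, ..., n-1). *)

Definition path_adj (i j : nat) : R :=
  if orb (Nat.eqb (S i) j) (Nat.eqb (S j) i) then 1 else 0.

Definition deg_mx (n : nat) (A : nat -> nat -> R) (i j : nat) : R :=
  if Nat.eqb i j then rsum n (fun k => A i k) else 0.

Definition A_alpha (n : nat) (alpha : R) (A : nat -> nat -> R) (i j : nat) : R :=
  alpha * deg_mx n A i j + (1 - alpha) * A i j.

Definition eigenvalue (n : nat) (M : nat -> nat -> R) (l : R) : Prop :=
  exists x : nat -> R,
    (exists i, (i < n)%nat /\ x i <> 0) /\
    forall i, (i < n)%nat -> rsum n (fun j => M i j * x j) = l * x i.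

Definition is_rho (n : nat) (M : nat -> nat -> R) (r : R) : Prop :=
  eigenvalue n M r /\ forall l, eigenvalue n M l -> l <= r.

From Stdlib Require Import Reals Lra Lia Classical.
Open Scope R_scope.

(* A_alpha(P_n) is the symmetric tridiagonal matrix with diagonal alpha deg(i) and
   off-diagonal 1 - alpha.  For alpha < 1 its largest eigenvalue rho is a Perron root: the
   least l at which the shooting solution of (A - l) x = 0 first vanishes at index n, the
   earlier entries forming a positive eigenvector u.  A positive v with A v + s = beta v and
   s >= 0 gives rho <= beta (Collatz-Wielandt), and by symmetry <u, s> = (beta - rho) <u, v>,
   so rho = beta iff s = 0.  The test vectors are sin((i+1) pi/(n+1)), the Perron vector of
   A(P_n), with slack alpha (2 - deg) v, and sin((2i+1) pi/(2n)), the Perron vector of the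
   signless Laplacian D + A, with slack (2 alpha - 1)(2 - deg) v; these vanish exactly for
   alpha = 0 and alpha = 1/2.  For alpha = 1 the matrix is D(P_n), with largest entry 2. *)

Lemma rsum_ext n f g : (forall j, (j < n)%nat -> f j = g j) -> rsum n f = rsum n g.
Proof.
  induction n as [|n IH]; intros H; simpl; [reflexivity|].
  rewrite IH by (intros; apply H; lia). rewrite H by lia. reflexivity.
Qed.

Lemma rsum_plus n f g : rsum n (fun j => f j + g j) = rsum n f + rsum n g.
Proof. induction n as [|n IH]; simpl; [lra|]. rewrite IH; lra. Qed.

Lemma rsum_scal n c f : rsum n (fun j => c * f j) = c * rsum n f.
Proof. induction n as [|n IH]; simpl; [lra|]. rewrite IH; lra. Qed.

Lemma rsum_indicator n a c :
  rsum n (fun j => if Nat.eqb j a then c else 0) = if Nat.ltb a n then c else 0.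
Proof.
  induction n as [|n IH]; simpl; [reflexivity|]. rewrite IH.
  destruct (Nat.eqb_spec n a), (Nat.ltb_spec a n), (Nat.ltb_spec a (S n)); lia || lra.
Qed.

Lemma rsum_le n f g : (forall j, (j < n)%nat -> f j <= g j) -> rsum n f <= rsum n g.
Proof.
  induction n as [|n IH]; intros H; simpl; [lra|].
  pose proof (IH (fun j Hj => H j ltac:(lia))). pose proof (H n ltac:(lia)). lra.
Qed.

Lemma rsum_lt n f g i0 : (i0 < n)%nat -> (forall j, (j < n)%nat -> f j <= g j) ->
  f i0 < g i0 -> rsum n f < rsum n g.
Proof.
  induction n as [|n IH]; intros Hi H Hlt; simpl; [lia|].
  destruct (Nat.eq_dec i0 n) as [->|Hne].
  - pose proof (rsum_le n f g (fun j Hj => H j ltac:(lia))). lra.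
  - pose proof (IH ltac:(lia) (fun j Hj => H j ltac:(lia)) Hlt). pose proof (H n ltac:(lia)). lra.
Qed.

Lemma rsum_pos n f : (0 < n)%nat -> (forall j, (j < n)%nat -> 0 < f j) -> 0 < rsum n f.
Proof.
  intros Hn H. replace 0 with (rsum n (fun _ => 0)).
  - apply (rsum_lt n _ _ 0); auto. intros j Hj. left. auto.
  - clear. induction n as [|n IH]; simpl; lra.
Qed.

Lemma rsum_ge_term n f i : (forall j, (j < n)%nat -> 0 <= f j) -> (i < n)%nat -> f i <= rsum n f.
Proof.
  induction n as [|n IH]; intros H Hi; simpl; [lia|].
  assert (0 <= rsum n f).
  { replace 0 with (rsum n (fun _ => 0)) by (clear; induction n; simpl; lra).
    apply rsum_le. intros j Hj. apply H. lia. }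
  destruct (Nat.eq_dec i n) as [->|Hne]; [lra|].
  pose proof (IH (fun j Hj => H j ltac:(lia)) ltac:(lia)). pose proof (H n ltac:(lia)). lra.
Qed.

Lemma rsum_S_l n f : rsum (S n) f = f O + rsum n (fun i => f (S i)).
Proof. induction n as [|n IH]; simpl in *; [lra|]. rewrite IH; lra. Qed.

(** * Tridiagonal form of A_alpha(P_n) *)

(* Neighbour values on the index range [0, n), with 0 outside it. *)
Definition prev (x : nat -> R) (i : nat) : R := match i with O => 0 | S k => x k end.
Definition next (n : nat) (x : nat -> R) (i : nat) : R := if Nat.ltb (S i) n then x (S i) else 0.

Definition tridiag (n : nat) (d : nat -> R) (m : R) (x : nat -> R) (i : nat) : R :=
  d i * x i + m * (prev x i + next n x i).

Definition tridiag_eigenvalue (n : nat) (d : nat -> R) (m l : R) : Prop :=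
  exists x : nat -> R, (exists i, (i < n)%nat /\ x i <> 0) /\
    forall i, (i < n)%nat -> tridiag n d m x i = l * x i.

Definition tridiag_rho (n : nat) (d : nat -> R) (m r : R) : Prop :=
  tridiag_eigenvalue n d m r /\ forall l, tridiag_eigenvalue n d m l -> l <= r.

Definition path_deg (n i : nat) : R := prev (fun _ => 1) i + next n (fun _ => 1) i.

Lemma path_adj_row n x i : (i < n)%nat ->
  rsum n (fun j => path_adj i j * x j) = prev x i + next n x i.
Proof.
  intros Hi.
  transitivity (rsum n (fun j => (if Nat.eqb j (S i) then x (S i) else 0) +
     (if Nat.eqb j (pred i) then (if Nat.eqb i 0 then 0 else x (pred i)) else 0))).
  - apply rsum_ext; intros j Hj. unfold path_adj.
    destruct (Nat.eqb_spec (S i) j), (Nat.eqb_spec (S j) i), (Nat.eqb_spec j (S i)),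
      (Nat.eqb_spec j (pred i)), (Nat.eqb_spec i 0); simpl; subst; try lia; simpl; lra.
  - rewrite rsum_plus, !rsum_indicator. unfold prev, next.
    destruct i; simpl;
      repeat match goal with |- context[Nat.ltb ?a ?b] => destruct (Nat.ltb_spec a b) end;
      lia || lra.
Qed.

Lemma A_alpha_path_row n alpha x i : (i < n)%nat ->
  rsum n (fun j => A_alpha n alpha path_adj i j * x j) =
  tridiag n (fun k => alpha * path_deg n k) (1 - alpha) x i.
Proof.
  intros Hi. unfold A_alpha, deg_mx.
  transitivity (rsum n (fun j => alpha * (if Nat.eqb j i then path_deg n i * x i else 0)
                                 + (1 - alpha) * (path_adj i j * x j))).
  - apply rsum_ext; intros j Hj. destruct (Nat.eqb_spec i j), (Nat.eqb_spec j i); try lia.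
    + subst. unfold path_deg. rewrite <- path_adj_row by exact Hi.
      rewrite (rsum_ext n (fun k => path_adj j k) (fun k => path_adj j k * 1)) by (intros; ring).
      ring.
    + ring.
  - rewrite rsum_plus, !rsum_scal, rsum_indicator, path_adj_row by exact Hi.
    destruct (Nat.ltb_spec i n); [|lia]. unfold tridiag. ring.
Qed.

Lemma is_rho_A_alpha_path n alpha r :
  is_rho n (A_alpha n alpha path_adj) r <->
  tridiag_rho n (fun k => alpha * path_deg n k) (1 - alpha) r.
Proof.
  assert (Heig : forall l, eigenvalue n (A_alpha n alpha path_adj) l <->
            tridiag_eigenvalue n (fun k => alpha * path_deg n k) (1 - alpha) l).
  { intros l. split; intros [x [Hx Hex]]; exists x; split; auto; intros i Hi;
      specialize (Hex i Hi); rewrite A_alpha_path_row in *; auto. }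
  unfold is_rho, tridiag_rho. split; intros [Hr Hmax]; split;
    try apply Heig; auto; intros l Hl; apply Hmax, Heig, Hl.
Qed.

Lemma path_deg_bounds n i : 0 <= path_deg n i <= 2.
Proof. unfold path_deg, prev, next. destruct i, (Nat.ltb _ _); lra. Qed.

Lemma path_deg_eq n i : (1 < n)%nat -> (i < n)%nat ->
  path_deg n i = 2 - (if Nat.eqb i 0 then 1 else 0) - (if Nat.eqb (S i) n then 1 else 0).
Proof.
  intros Hn Hi. unfold path_deg, prev, next.
  destruct i as [|i];
    [destruct (Nat.ltb_spec 1 n), (Nat.eqb_spec 1 n)
    |destruct (Nat.ltb_spec (S (S i)) n), (Nat.eqb_spec (S (S i)) n)]; simpl; lia || lra.
Qed.

Lemma path_deg_first n : (1 < n)%nat -> path_deg n 0 = 1.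
Proof. intros Hn. unfold path_deg, prev, next. destruct (Nat.ltb_spec 1 n); lia || lra. Qed.

Lemma path_deg_interior n i : (0 < i)%nat -> (S i < n)%nat -> path_deg n i = 2.
Proof.
  intros Hi Hn. unfold path_deg, prev, next. destruct i; [lia|].
  destruct (Nat.ltb_spec (S (S i)) n); lia || lra.
Qed.

(** * Collatz-Wielandt bounds *)

Lemma exists_max_ratio n (f g : nat -> R) : (0 < n)%nat -> (forall j, (j < n)%nat -> 0 < g j) ->
  exists i0, (i0 < n)%nat /\ forall j, (j < n)%nat -> f j * g i0 <= f i0 * g j.
Proof.
  induction n as [|n IH]; intros Hn Hg; [lia|].
  destruct n as [|n].
  - exists O. split; [lia|]. intros j Hj. replace j with O by lia. lra.
  - destruct IH as [i0 [Hi0 Hmax]]; [lia | intros; apply Hg; lia |].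
    destruct (Rle_dec (f (S n) * g i0) (f i0 * g (S n))) as [Hle|Hgt].
    + exists i0. split; [lia|]. intros j Hj.
      destruct (Nat.eq_dec j (S n)) as [->|]; [exact Hle | apply Hmax; lia].
    + exists (S n). split; [lia|]. intros j Hj.
      destruct (Nat.eq_dec j (S n)) as [->|]; [lra|].
      specialize (Hmax j ltac:(lia)).
      pose proof (Hg i0 ltac:(lia)). pose proof (Hg j ltac:(lia)). pose proof (Hg (S n) ltac:(lia)).
      apply Rmult_le_reg_r with (g i0); [assumption|].
      apply Rle_trans with (f i0 * g j * g (S n)); nra.
Qed.

(* Test the eigen-equation at the index maximising |x i| / v i. *)
Lemma tridiag_eigenvalue_le n d m v beta l :
  (forall i, (i < n)%nat -> 0 <= d i) -> 0 <= m ->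
  (forall i, (i < n)%nat -> 0 < v i) ->
  (forall i, (i < n)%nat -> tridiag n d m v i <= beta * v i) ->
  tridiag_eigenvalue n d m l -> l <= beta.
Proof.
  intros Hd Hm Hv Hsuper [x [[i1 [Hi1 Hx1]] Hx]].
  destruct (exists_max_ratio n (fun j => Rabs (x j)) v) as [i0 [Hi0 Hmax]]; [lia | exact Hv |].
  cbv beta in Hmax. pose proof (Hv i0 Hi0). pose proof (Hd i0 Hi0).
  assert (Hx0 : 0 < Rabs (x i0)).
  { pose proof (Hmax i1 Hi1). pose proof (Hv i1 Hi1). pose proof (Rabs_pos_lt _ Hx1).
    pose proof (Rabs_pos (x i0)). nra. }
  assert (Hprev : Rabs (prev x i0) * v i0 <= Rabs (x i0) * prev v i0).
  { unfold prev. destruct i0; [rewrite Rabs_R0; lra | apply Hmax; lia]. }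
  assert (Hnext : Rabs (next n x i0) * v i0 <= Rabs (x i0) * next n v i0).
  { unfold next. destruct (Nat.ltb_spec (S i0) n); [apply Hmax; lia | rewrite Rabs_R0; lra]. }
  assert (Habs : Rabs l * Rabs (x i0) <=
                 d i0 * Rabs (x i0) + m * (Rabs (prev x i0) + Rabs (next n x i0))).
  { rewrite <- Rabs_mult, <- Hx by exact Hi0. unfold tridiag.
    eapply Rle_trans; [apply Rabs_triang|].
    rewrite !Rabs_mult, (Rabs_right (d i0)), (Rabs_right m) by lra.
    pose proof (Rabs_triang (prev x i0) (next n x i0)). nra. }
  specialize (Hsuper i0 Hi0). unfold tridiag in Hsuper.
  assert (Rabs l * Rabs (x i0) * v i0 <= beta * v i0 * Rabs (x i0)) by nra.
  assert (Rabs l <= beta).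
  { apply Rmult_le_reg_r with (Rabs (x i0) * v i0); nra. }
  pose proof (Rle_abs l). lra.
Qed.

Lemma rsum_mul_prev n a b :
  rsum n (fun i => a i * prev b i) = rsum n (fun i => b i * next n a i).
Proof.
  destruct n as [|k]; [reflexivity|].
  rewrite rsum_S_l. simpl rsum at 2. unfold prev at 1, next at 2. rewrite Nat.ltb_irrefl.
  rewrite (rsum_ext k (fun i => b i * next (S k) a i) (fun i => a (S i) * b i)).
  - simpl. lra.
  - intros j Hj. unfold next. destruct (Nat.ltb_spec (S j) (S k)); [ring | lia].
Qed.

Lemma tridiag_sym n d m u v :
  rsum n (fun i => u i * tridiag n d m v i) = rsum n (fun i => v i * tridiag n d m u i).
Proof.
  assert (Hsplit : forall a b, rsum n (fun i => a i * tridiag n d m b i) =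
            rsum n (fun i => a i * d i * b i) +
            m * (rsum n (fun i => a i * prev b i) + rsum n (fun i => b i * prev a i))).
  { intros a b. rewrite (rsum_mul_prev n b a), <- rsum_plus, <- rsum_scal, <- rsum_plus.
    apply rsum_ext. intros. unfold tridiag. ring. }
  rewrite !Hsplit, (rsum_ext n (fun i => u i * d i * v i) (fun i => v i * d i * u i))
    by (intros; ring).
  lra.
Qed.

Lemma tridiag_eigenvalue_lt n d m u v s r beta i0 :
  (i0 < n)%nat ->
  (forall i, (i < n)%nat -> 0 < u i) -> (forall i, (i < n)%nat -> 0 < v i) ->
  (forall i, (i < n)%nat -> 0 <= s i) -> 0 < s i0 ->
  (forall i, (i < n)%nat -> tridiag n d m u i = r * u i) ->
  (forall i, (i < n)%nat -> tridiag n d m v i + s i = beta * v i) ->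
  r < beta.
Proof.
  intros Hi0 Hu Hv Hs Hs0 Hequ Hslack.
  assert (Hpair : rsum n (fun i => u i * s i) = (beta - r) * rsum n (fun i => u i * v i)).
  { transitivity (rsum n (fun i => beta * (u i * v i)) - rsum n (fun i => u i * tridiag n d m v i)).
    - rewrite (rsum_ext n (fun i => u i * s i)
                 (fun i => beta * (u i * v i) + (-1) * (u i * tridiag n d m v i))).
      + rewrite rsum_plus, !rsum_scal. lra.
      + intros j Hj.
        replace (s j) with (beta * v j - tridiag n d m v j) by (rewrite <- Hslack by exact Hj; ring).
        ring.
    - rewrite tridiag_sym, rsum_scal,
        (rsum_ext n (fun i => v i * tridiag n d m u i) (fun i => r * (u i * v i))),
        rsum_scal by (intros j Hj; rewrite Hequ by exact Hj; ring).
      ring. }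
  assert (0 < rsum n (fun i => u i * s i)).
  { replace 0 with (rsum n (fun _ => 0)) by (clear; induction n; simpl; lra).
    apply (rsum_lt n _ _ i0 Hi0).
    - intros j Hj. pose proof (Hu j Hj). pose proof (Hs j Hj). nra.
    - pose proof (Hu i0 Hi0). nra. }
  assert (0 < rsum n (fun i => u i * v i)).
  { apply rsum_pos; [lia|]. intros j Hj. pose proof (Hu j Hj). pose proof (Hv j Hj). nra. }
  nra.
Qed.

(** * The Perron root by shooting *)

Lemma continuity_pt_pos_near f r : continuity_pt f r -> 0 < f r ->
  exists delta, 0 < delta /\ forall z, Rabs (z - r) < delta -> 0 < f z.
Proof.
  intros Hc Hpos. destruct (Hc (f r) Hpos) as [delta [Hdelta Hnear]].
  exists delta. split; [exact Hdelta|]. intros z Hz.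
  destruct (Req_dec z r) as [->|Hne]; [exact Hpos|].
  assert (Hdist : Rabs (f z - f r) < f r) by (apply (Hnear z); repeat split; auto).
  pose proof (Rle_abs (- (f z - f r))). rewrite Rabs_Ropp in *. lra.
Qed.

Lemma continuity_pt_nonneg_limit f r : continuity_pt f r ->
  (forall delta, 0 < delta -> exists z, Rabs (z - r) < delta /\ 0 < f z) -> 0 <= f r.
Proof.
  intros Hc Hnear. destruct (Rle_dec 0 (f r)) as [|Hneg]; [assumption|]. exfalso.
  destruct (continuity_pt_pos_near (fun z => - f z) r) as [delta [Hdelta Hpos]].
  - apply continuity_pt_opp, Hc.
  - lra.
  - destruct (Hnear delta Hdelta) as [z [Hz Hfz]]. specialize (Hpos z Hz). lra.
Qed.

Lemma continuity_pt_pos_near_family (f : nat -> R -> R) N r :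
  (forall k, (k <= N)%nat -> continuity_pt (f k) r /\ 0 < f k r) ->
  exists delta, 0 < delta /\ forall z, Rabs (z - r) < delta -> forall k, (k <= N)%nat -> 0 < f k z.
Proof.
  induction N as [|N IH]; intros Hf.
  - destruct (Hf O (le_n O)) as [Hc Hpos].
    destruct (continuity_pt_pos_near (f O) r Hc Hpos) as [delta [Hdelta Hnear]].
    exists delta. split; [exact Hdelta|]. intros z Hz k Hk. replace k with O by lia. auto.
  - destruct IH as [delta1 [Hdelta1 Hnear1]]; [intros k Hk; apply Hf; lia|].
    destruct (Hf (S N) (le_n _)) as [Hc Hpos].
    destruct (continuity_pt_pos_near (f (S N)) r Hc Hpos) as [delta2 [Hdelta2 Hnear2]].
    exists (Rmin delta1 delta2). split; [apply Rmin_pos; assumption|].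
    intros z Hz k Hk. pose proof (Rmin_l delta1 delta2). pose proof (Rmin_r delta1 delta2).
    destruct (Nat.eq_dec k (S N)) as [->|]; [apply Hnear2; lra | apply Hnear1; lra || lia].
Qed.

Lemma exists_inf (P : R -> Prop) : (exists l, P l) -> (exists lb, forall l, P l -> lb <= l) ->
  exists r, (forall l, P l -> r <= l) /\
            forall delta, 0 < delta -> exists l, P l /\ l < r + delta.
Proof.
  intros [l0 Hl0] [lb Hlb].
  destruct (completeness (fun z => P (- z))) as [s [Hub Hleast]].
  - exists (- lb). intros z Hz. specialize (Hlb _ Hz). lra.
  - exists (- l0). rewrite Ropp_involutive. exact Hl0.
  - exists (- s). split.
    + intros l Hl. assert (Hz : P (- - l)) by (rewrite Ropp_involutive; exact Hl).
      specialize (Hub _ Hz). lra.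
    + intros delta Hdelta. apply NNPP. intros Hnone.
      assert (Hbound : is_upper_bound (fun z => P (- z)) (s - delta)).
      { intros z Hz. apply Rnot_lt_le. intros Hlt. apply Hnone.
        exists (- z). split; [exact Hz | lra]. }
      specialize (Hleast _ Hbound). lra.
Qed.

Section Shooting.

Variables (d : nat -> R) (m : R).
Hypothesis m_pos : 0 < m.

(* Solve rows 0, ..., k-1 of (tridiag - l) x = 0 for x_k, starting from x_{-1} = 0, x_0 = 1. *)
Fixpoint shoot (l : R) (k : nat) : R :=
  match k with
  | O => 1
  | S k' => ((l - d k') * shoot l k' - m * match k' with O => 0 | S k'' => shoot l k'' end) / m
  end.

Lemma shoot_S l k : m * shoot l (S k) = (l - d k) * shoot l k - m * prev (shoot l) k.
Proof. change (prev (shoot l) k) with (match k with O => 0 | S k'' => shoot l k'' end). simpl. field. lra. Qed.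

Lemma continuity_pt_shoot_step c f g x0 : continuity_pt f x0 -> continuity_pt g x0 ->
  continuity_pt (fun l => ((l - c) * f l - m * g l) * / m) x0.
Proof.
  intros Hf Hg.
  assert (Hconst : forall a, continuity_pt (fun _ => a) x0)
    by (intros a; apply continuity_pt_const; intros ? ?; reflexivity).
  apply (continuity_pt_mult (fun l => (l - c) * f l - m * g l) (fun _ => / m)); [|apply Hconst].
  apply (continuity_pt_minus (fun l => (l - c) * f l) (fun l => m * g l)).
  - apply (continuity_pt_mult (fun l => l - c) f); [|exact Hf].
    apply (continuity_pt_minus (fun l => l) (fun _ => c)); [|apply Hconst].
    apply derivable_continuous_pt, derivable_pt_id.
  - apply (continuity_pt_mult (fun _ => m) g); [apply Hconst | exact Hg].
Qed.

Lemma shoot_continuous k x0 : continuity_pt (fun l => shoot l k) x0.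
Proof.
  enough (H : continuity_pt (fun l => shoot l k) x0 /\ continuity_pt (fun l => shoot l (S k)) x0)
    by apply H.
  assert (Hone : continuity_pt (fun _ => 1) x0)
    by (apply continuity_pt_const; intros ? ?; reflexivity).
  induction k as [|k [IH1 IH2]].
  - split; [exact Hone|].
    apply (continuity_pt_shoot_step (d 0) (fun _ => 1) (fun _ => 0)); [exact Hone|].
    apply continuity_pt_const. intros ? ?. reflexivity.
  - split; [exact IH2|].
    exact (continuity_pt_shoot_step (d (S k)) _ _ x0 IH2 IH1).
Qed.

Lemma shoot_pos_large n b : (forall i, (i < n)%nat -> d i + 2 * m <= b) ->
  forall k, (k <= n)%nat -> 0 < shoot b k /\ 0 <= prev (shoot b) k <= shoot b k.
Proof.
  intros Hb k. induction k as [|k IH]; intros Hk; simpl prev.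
  - simpl. lra.
  - destruct IH as [Hpos [Hprev0 Hprev]]; [lia|]. specialize (Hb k ltac:(lia)).
    pose proof (shoot_S b k).
    assert (m * shoot b k <= m * shoot b (S k)) by nra.
    assert (shoot b k <= shoot b (S k)) by (apply Rmult_le_reg_l with m; assumption).
    lra.
Qed.

Lemma shoot_no_double_zero l k : shoot l k = 0 -> shoot l (S k) = 0 -> False.
Proof.
  induction k as [|k IH]; intros H0 H1; [simpl in H0; lra|].
  apply IH; [|exact H0].
  pose proof (shoot_S l (S k)) as HS. rewrite H0, H1 in HS. simpl prev in HS. nra.
Qed.

(* A zero inside [0, n) is flanked by nonnegative values, hence by a second zero. *)
Lemma shoot_pos_of_nonneg l n : (forall k, (k <= n)%nat -> 0 <= shoot l k) ->
  forall k, (k < n)%nat -> 0 < shoot l k.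
Proof.
  intros Hnn k Hk. destruct (Hnn k ltac:(lia)) as [|Hzero]; [assumption|]. exfalso.
  destruct k as [|j]; [simpl in Hzero; lra|].
  pose proof (shoot_S l (S j)) as HS. rewrite <- Hzero in HS. simpl prev in HS.
  pose proof (Hnn (S (S j)) Hk). pose proof (Hnn j ltac:(lia)).
  apply (shoot_no_double_zero l j); [nra | auto].
Qed.

Lemma shoot_eigenvector l n : shoot l n = 0 ->
  forall i, (i < n)%nat -> tridiag n d m (shoot l) i = l * shoot l i.
Proof.
  intros Hn i Hi. unfold tridiag.
  assert (Hnext : next n (shoot l) i = shoot l (S i)).
  { unfold next. destruct (Nat.ltb_spec (S i) n); [reflexivity|].
    replace (S i) with n by lia. auto. }
  rewrite Hnext. pose proof (shoot_S l i). lra.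
Qed.

(* The Perron root is the infimum of the l for which shoot l stays positive up to n. *)
Lemma exists_perron_root n b : (1 <= n)%nat -> (forall i, (i < n)%nat -> d i + 2 * m <= b) ->
  exists r, shoot r n = 0 /\ forall k, (k < n)%nat -> 0 < shoot r k.
Proof.
  intros Hn Hb.
  set (P := fun l => forall k, (k <= n)%nat -> 0 < shoot l k).
  destruct (exists_inf P) as [r [Hlow Happrox]].
  - exists b. intros k Hk. apply (shoot_pos_large n b Hb k Hk).
  - exists (d O). intros l Hl. specialize (Hl 1%nat Hn).
    pose proof (shoot_S l 0). simpl in *. nra.
  - assert (Hnn : forall k, (k <= n)%nat -> 0 <= shoot r k).
    { intros k Hk. apply (continuity_pt_nonneg_limit (fun l => shoot l k)); [apply shoot_continuous|].
      intros delta Hdelta. destruct (Happrox delta Hdelta) as [l [Hl Hlt]].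
      pose proof (Hlow l Hl). exists l. split; [rewrite Rabs_right; lra | apply Hl, Hk]. }
    assert (Hnot : ~ P r).
    { intros Hr.
      destruct (continuity_pt_pos_near_family (fun k l => shoot l k) n r) as [delta [Hdelta Hnear]].
      { intros k Hk. split; [apply shoot_continuous | apply Hr, Hk]. }
      assert (Hbelow : P (r - delta / 2))
        by (intros k Hk; apply Hnear; [rewrite Rabs_left; lra | exact Hk]).
      pose proof (Hlow _ Hbelow). lra. }
    pose proof (shoot_pos_of_nonneg r n Hnn) as Hpos.
    exists r. split; [|exact Hpos].
    destruct (Hnn n (le_n n)) as [Hlast|]; [|auto]. exfalso. apply Hnot.
    intros k Hk. destruct (Nat.eq_dec k n) as [->|]; [exact Hlast | apply Hpos; lia].
Qed.

End Shooting.

Lemma tridiag_rho_slack n d m beta v s :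
  (1 <= n)%nat -> (forall i, (i < n)%nat -> 0 <= d i) -> 0 < m ->
  (forall i, (i < n)%nat -> 0 < v i) -> (forall i, (i < n)%nat -> 0 <= s i) ->
  (forall i, (i < n)%nat -> tridiag n d m v i + s i = beta * v i) ->
  exists r, tridiag_rho n d m r /\ r <= beta /\ (r = beta <-> forall i, (i < n)%nat -> s i = 0).
Proof.
  intros Hn Hd Hm Hv Hs Hslack.
  destruct (exists_perron_root d m Hm n (rsum n d + 2 * m) Hn) as [r [Hroot Hpos]].
  { intros i Hi. pose proof (rsum_ge_term n d i Hd Hi). lra. }
  pose proof (shoot_eigenvector d m Hm r n Hroot) as Heig.
  set (u := shoot d m r) in *.
  assert (Hr : tridiag_eigenvalue n d m r).
  { exists u. split; [exists O; split; [lia | apply Rgt_not_eq, Hpos; lia] | exact Heig]. }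
  assert (Hsuper : forall i, (i < n)%nat -> tridiag n d m v i <= beta * v i).
  { intros i Hi. pose proof (Hslack i Hi). pose proof (Hs i Hi). lra. }
  assert (Hm0 : 0 <= m) by lra.
  assert (Hmax : forall l, tridiag_eigenvalue n d m l -> l <= r).
  { intros l. apply (tridiag_eigenvalue_le n d m u r l Hd Hm0 Hpos).
    intros i Hi. rewrite Heig by exact Hi. lra. }
  pose proof (tridiag_eigenvalue_le n d m v beta r Hd Hm0 Hv Hsuper Hr) as Hle.
  exists r. split; [|split; [exact Hle|split]].
  - split; [exact Hr | exact Hmax].
  - intros Heq i Hi. destruct (Hs i Hi) as [Hsi|]; [|auto]. exfalso.
    pose proof (tridiag_eigenvalue_lt n d m u v s r beta i Hi Hpos Hv Hs Hsi Heig Hslack). lra.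
  - intros Hzero. apply Rle_antisym; [exact Hle|].
    assert (Hbeta : tridiag_eigenvalue n d m beta).
    { exists v. split; [exists O; split; [lia | apply Rgt_not_eq, Hv; lia]|].
      intros i Hi. rewrite <- Hslack, Hzero by exact Hi. ring. }
    exact (Hmax beta Hbeta).
Qed.

(** * Sine test vectors *)

Definition sin_grid (a t : R) (i : nat) : R := sin (a + INR i * t).

Lemma sin_grid_pos a t n : 0 < a -> 0 <= t -> a + INR (pred n) * t < PI ->
  forall i, (i < n)%nat -> 0 < sin_grid a t i.
Proof.
  intros Ha Ht Hlast i Hi. unfold sin_grid.
  assert (INR i <= INR (pred n)) by (apply le_INR; lia).
  pose proof (pos_INR i). apply sin_gt_0; nra.
Qed.

(* The missing neighbours at the two ends are the ghost values x_{-1} and x_n of the grid. *)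
Lemma sin_grid_prev_next a t n i : (i < n)%nat ->
  prev (sin_grid a t) i + next n (sin_grid a t) i =
  2 * cos t * sin_grid a t i - (if Nat.eqb i 0 then sin (a - t) else 0)
    - (if Nat.eqb (S i) n then sin (a + INR n * t) else 0).
Proof.
  intros Hi.
  assert (Hprev : prev (sin_grid a t) i =
            sin (a + INR i * t - t) - (if Nat.eqb i 0 then sin (a - t) else 0)).
  { unfold prev, sin_grid. destruct i as [|j]; simpl Nat.eqb.
    - simpl INR. replace (a + 0 * t - t) with (a - t) by ring. ring.
    - rewrite S_INR. replace (a + (INR j + 1) * t - t) with (a + INR j * t) by ring. ring. }
  assert (Hnext : next n (sin_grid a t) i =
            sin (a + INR i * t + t) - (if Nat.eqb (S i) n then sin (a + INR n * t) else 0)).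
  { unfold next, sin_grid.
    destruct (Nat.ltb_spec (S i) n), (Nat.eqb_spec (S i) n) as [<-|]; try lia;
      rewrite S_INR; replace (a + (INR i + 1) * t) with (a + INR i * t + t) by ring; ring. }
  rewrite Hprev, Hnext. unfold sin_grid.
  rewrite (sin_minus (a + INR i * t)), (sin_plus (a + INR i * t)). ring.
Qed.

Lemma sin_grid_path_adj_eigen n i : (i < n)%nat ->
  let t := PI / INR (n + 1) in
  prev (sin_grid t t) i + next n (sin_grid t t) i = 2 * cos t * sin_grid t t i.
Proof.
  intros Hi t. rewrite sin_grid_prev_next by exact Hi.
  replace (t - t) with 0 by ring.
  replace (t + INR n * t) with PI
    by (unfold t; rewrite plus_INR; simpl INR; field; pose proof (pos_INR n); lra).
  rewrite sin_0, sin_PI. destruct (Nat.eqb _ _), (Nat.eqb _ _); ring.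
Qed.

Lemma sin_grid_path_signless_laplacian_eigen n i : (1 < n)%nat -> (i < n)%nat ->
  let t := PI / INR n in
  path_deg n i * sin_grid (t / 2) t i + (prev (sin_grid (t / 2) t) i + next n (sin_grid (t / 2) t) i) =
  (2 + 2 * cos t) * sin_grid (t / 2) t i.
Proof.
  intros Hn Hi t. rewrite sin_grid_prev_next, path_deg_eq by assumption.
  assert (HnR : 0 < INR n) by (apply lt_0_INR; lia).
  assert (Hnt : INR n * t = PI) by (unfold t; field; lra).
  replace (t / 2 - t) with (- (t / 2)) by lra. rewrite sin_neg.
  rewrite Hnt, neg_sin.
  assert (Hlast : S i = n -> sin_grid (t / 2) t i = sin (t / 2)).
  { intros <-. unfold sin_grid. rewrite <- sin_PI_x. f_equal.
    rewrite S_INR in Hnt. lra. }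
  assert (Hfirst : sin_grid (t / 2) t 0 = sin (t / 2)).
  { unfold sin_grid. simpl INR. f_equal. lra. }
  destruct (Nat.eqb_spec (S i) n) as [Hl|Hl]; [rewrite (Hlast Hl)|];
    destruct (Nat.eqb_spec i 0) as [->|]; try lia; rewrite ?Hfirst; ring.
Qed.

Lemma rho_A_alpha_path_small n alpha : (1 < n)%nat -> 0 <= alpha < 1 / 2 ->
  let beta := 2 * alpha + 2 * (1 - alpha) * cos (PI / INR (n + 1)) in
  exists r, is_rho n (A_alpha n alpha path_adj) r /\ r <= beta /\ (r = beta <-> alpha = 0).
Proof.
  intros Hn Ha beta. set (t := PI / INR (n + 1)).
  assert (Hv : forall i, (i < n)%nat -> 0 < sin_grid t t i).
  { assert (HnR : INR (pred n) + 1 < INR (n + 1)).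
    { rewrite <- S_INR. apply lt_INR. lia. }
    pose proof (pos_INR (pred n)).
    assert (Ht : 0 < t) by (unfold t; apply Rdiv_lt_0_compat; [exact PI_RGT_0 | lra]).
    apply (sin_grid_pos _ _ n); [lra | lra |].
    replace PI with (INR (n + 1) * t) by (unfold t; field; lra). nra. }
  destruct (tridiag_rho_slack n (fun k => alpha * path_deg n k) (1 - alpha) beta (sin_grid t t)
              (fun i => alpha * (2 - path_deg n i) * sin_grid t t i))
    as [r [Hr [Hle Heq]]]; [lia | | lra | exact Hv | | |].
  - intros i _. pose proof (path_deg_bounds n i). nra.
  - intros i Hi. pose proof (path_deg_bounds n i). pose proof (Hv i Hi).
    apply Rmult_le_pos; [apply Rmult_le_pos|]; lra.
  - intros i Hi. pose proof (sin_grid_path_adj_eigen n i Hi) as Hgrid. cbv zeta in Hgrid. fold t in Hgrid.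
    unfold tridiag. rewrite Hgrid. unfold beta. fold t. ring.
  - exists r. split; [apply is_rho_A_alpha_path, Hr|]. split; [exact Hle|]. rewrite Heq. split.
    + intros Hzero. specialize (Hzero O ltac:(lia)). pose proof (Hv O ltac:(lia)).
      rewrite path_deg_first in Hzero by exact Hn. nra.
    + intros -> i _. ring.
Qed.

Lemma rho_A_alpha_path_large n alpha : (1 < n)%nat -> 1 / 2 <= alpha < 1 ->
  let beta := 2 * alpha + 2 * (1 - alpha) * cos (PI / INR n) in
  exists r, is_rho n (A_alpha n alpha path_adj) r /\ r <= beta /\ (r = beta <-> alpha = 1 / 2).
Proof.
  intros Hn Ha beta. set (t := PI / INR n).
  assert (Hv : forall i, (i < n)%nat -> 0 < sin_grid (t / 2) t i).
  { assert (HnR : INR (pred n) + 1 = INR n) by (rewrite <- S_INR; f_equal; lia).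
    pose proof (pos_INR (pred n)).
    assert (Ht : 0 < t) by (unfold t; apply Rdiv_lt_0_compat; [exact PI_RGT_0 | lra]).
    apply (sin_grid_pos _ _ n); [lra | lra |].
    replace PI with (INR n * t) by (unfold t; field; lra). nra. }
  destruct (tridiag_rho_slack n (fun k => alpha * path_deg n k) (1 - alpha) beta (sin_grid (t / 2) t)
              (fun i => (2 * alpha - 1) * (2 - path_deg n i) * sin_grid (t / 2) t i))
    as [r [Hr [Hle Heq]]]; [lia | | lra | exact Hv | | |].
  - intros i _. pose proof (path_deg_bounds n i). nra.
  - intros i Hi. pose proof (path_deg_bounds n i). pose proof (Hv i Hi).
    apply Rmult_le_pos; [apply Rmult_le_pos|]; lra.
  - intros i Hi. pose proof (sin_grid_path_signless_laplacian_eigen n i Hn Hi) as Hgrid.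
    cbv zeta in Hgrid. fold t in Hgrid.
    unfold tridiag. unfold beta. fold t. nra.
  - exists r. split; [apply is_rho_A_alpha_path, Hr|]. split; [exact Hle|]. rewrite Heq. split.
    + intros Hzero. specialize (Hzero O ltac:(lia)). pose proof (Hv O ltac:(lia)).
      rewrite path_deg_first in Hzero by exact Hn. nra.
    + intros -> i _. field.
Qed.

Lemma rho_A_one_path n : (2 < n)%nat -> is_rho n (A_alpha n 1 path_adj) 2.
Proof.
  intros Hn. apply is_rho_A_alpha_path. rewrite Rminus_diag. split.
  - exists (fun j => if Nat.eqb j 1 then 1 else 0). split; [exists 1%nat; split; [lia | simpl; lra]|].
    intros i Hi. unfold tridiag. destruct (Nat.eqb_spec i 1) as [->|]; [|ring].
    rewrite path_deg_interior by lia. ring.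
  - intros l Hl. apply (tridiag_eigenvalue_le n (fun k => 1 * path_deg n k) 0 (fun _ => 1) 2 l);
      [| lra | | | exact Hl].
    + intros i _. pose proof (path_deg_bounds n i). lra.
    + intros. lra.
    + intros i _. unfold tridiag. pose proof (path_deg_bounds n i). lra.
Qed.

Theorem corollary12 (n : nat) (alpha : R) :
  (3 <= n)%nat -> 0 <= alpha <= 1 ->
  let bound :=
    if Rlt_dec alpha (1/2)
    then 2 * alpha + 2 * (1 - alpha) * cos (PI / INR (n + 1))
    else 2 * alpha + 2 * (1 - alpha) * cos (PI / INR n) in
  exists r : R,
    is_rho n (A_alpha n alpha path_adj) r /\
    r <= bound /\
    (r = bound <-> (alpha = 0 \/ alpha = 1/2 \/ alpha = 1)).
Proof.
  intros Hn Ha bound. unfold bound. destruct (Rlt_dec alpha (1 / 2)) as [Hsmall|Hlarge].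
  - destruct (rho_A_alpha_path_small n alpha) as [r [Hr [Hle Heq]]]; [lia | lra |].
    exists r. split; [exact Hr|]. split; [exact Hle|]. rewrite Heq. lra.
  - destruct (Req_dec alpha 1) as [->|Hne].
    + exists 2. split; [apply rho_A_one_path; lia|]. lra.
    + destruct (rho_A_alpha_path_large n alpha) as [r [Hr [Hle Heq]]]; [lia | lra |].
      exists r. split; [exact Hr|]. split; [exact Hle|]. rewrite Heq. lra.
Qed.
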